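(* Let $\kappa$, $E$ and $b$ be as in the context, and suppose $\delta(\kappa,b)(E)<1$. Let $g,h:(0,1)\to\mathbb{R}$ be non-decreasing functions with $g(r)\le h(r)$ for all $r\in(0,1)\setminus E$. Put $s(r)=1-b(r)(1-r)$. Then there exists $R\in[0,1)$ such that $g(r)\le h(s(r))$ for all $r\in[R,1)$.
   Context: $\kappa:(0,1)\to(0,1)$ is either the identity $\kappa(x)=x$ or a strictly increasing, continuous, convex function with $\lim_{x\to1^-}\frac{1-x}{\kappa(1-x)}=\infty$ satisfying the doubling-type property: for every $\delta:(0,1)\to(0,1)$ with $\delta(x)\to0$ as $x\to1^-$ and every $\gamma>0$ there is $\tau>0$ with $\lim_{x\to1^-}\frac{\kappa(1-x)}{\kappa((1-x)(\gamma-\delta(x)))}=\lim_{x\to1^-}\frac{\kappa(1-x)}{\kappa((1-x)(\gamma+\delta(x)))}=\tau$. $E\subset[0,1)$ is measurable with $\int_E\frac{dx}{\kappa(1-x)}<\infty$, and $b:(0,1)\to(0,1)$ is a function. The $\kappa$-density of $E$ relative to $b$ is $$\delta(\kappa,b)(E)=\limsup_{r\to1^-}\frac{\frac{\kappa(1-r)}{1-r}\int_{E\cap[r,1)}\frac{dx}{\kappa(1-x)}}{1-b(r)}.$$ *)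

From Stdlib Require Import Reals Lra.
Open Scope R_scope.

Definition lim_left1 (F : R -> R) (L : R) : Prop :=
  forall eps, 0 < eps -> exists eta, 0 < eta /\
    forall x, 1 - eta < x < 1 -> Rabs (F x - L) < eps.

Definition lim_left1_infty (F : R -> R) : Prop :=
  forall M, exists eta, 0 < eta /\ forall x, 1 - eta < x < 1 -> M < F x.

Definition kappa_doubling (kappa : R -> R) : Prop :=
  forall delta : R -> R,
    (forall x, 0 < x < 1 -> 0 < delta x < 1) ->
    lim_left1 delta 0 ->
    forall gamma, 0 < gamma -> exists tau, 0 < tau /\
      lim_left1 (fun x => kappa (1 - x) / kappa ((1 - x) * (gamma - delta x))) tau /\
      lim_left1 (fun x => kappa (1 - x) / kappa ((1 - x) * (gamma + delta x))) tau.

Definition admissible_kappa (kappa : R -> R) : Prop :=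
  (forall x, 0 < x < 1 -> 0 < kappa x < 1) /\
  ( (forall x, 0 < x < 1 -> kappa x = x)
    \/
    ( (forall x y, 0 < x < 1 -> 0 < y < 1 -> x < y -> kappa x < kappa y)
      /\ (forall x, 0 < x < 1 -> continuity_pt kappa x)
      /\ (forall x y t, 0 < x < 1 -> 0 < y < 1 -> 0 <= t <= 1 ->
            kappa (t * x + (1 - t) * y) <= t * kappa x + (1 - t) * kappa y)
      /\ lim_left1_infty (fun x => (1 - x) / kappa (1 - x))
      /\ kappa_doubling kappa ) ).

Definition len_cover_lt (A : R -> Prop) (eps : R) : Prop :=
  exists a b : nat -> R,
    (forall n, a n <= b n) /\
    (forall x, A x -> exists n, a n <= x <= b n) /\
    exists S, infinite_sum (fun n => b n - a n) S /\ S < eps.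

Definition open_set (U : R -> Prop) : Prop :=
  forall x, U x -> exists d, 0 < d /\ forall y, Rabs (y - x) < d -> U y.

(* Standard characterisation: E is Lebesgue measurable iff for every eps > 0
   there is an open U containing E with outer measure of U \ E below eps. *)
Definition lebesgue_measurable (E : R -> Prop) : Prop :=
  forall eps, 0 < eps -> exists U, open_set U /\ (forall x, E x -> U x) /\
    len_cover_lt (fun x => U x /\ ~ E x) eps.

Definition wfun (kappa : R -> R) : R -> R := fun x => / kappa (1 - x).

Definition wcover_sum (kappa : R -> R) (A : R -> Prop) (S : R) : Prop :=
  exists (a b : nat -> R) (pr : forall n, Riemann_integrable (wfun kappa) (a n) (b n)),
    (forall n, 0 < a n /\ a n <= b n /\ b n < 1) /\
    (forall x, A x -> 0 < x < 1 -> exists n, a n <= x <= b n) /\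
    infinite_sum (fun n => RiemannInt (pr n)) S.

(* wint kappa A m : the (finite) value of int_A dx/kappa(1-x) is m.
   For measurable A this infimum over interval covers is the Lebesgue integral. *)
Definition wint (kappa : R -> R) (A : R -> Prop) (m : R) : Prop :=
  (forall S, wcover_sum kappa A S -> m <= S) /\
  (forall eps, 0 < eps -> exists S, wcover_sum kappa A S /\ S < m + eps).

Definition wint_finite (kappa : R -> R) (A : R -> Prop) : Prop :=
  exists m, wint kappa A m.

(* The quantity whose limsup is the kappa-density. *)
Definition density_ratio (kappa b : R -> R) (m r : R) : R :=
  (kappa (1 - r) / (1 - r) * m) / (1 - b r).

(* delta(kappa,b)(E) < 1, i.e. limsup_{r->1^-} ratio(r) < 1 *)
Definition density_lt_1 (kappa b : R -> R) (E : R -> Prop) : Prop :=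
  exists c, c < 1 /\ exists R0, R0 < 1 /\
    forall r, 0 < r -> R0 <= r < 1 ->
      forall m, wint kappa (fun x => E x /\ r <= x) m ->
        density_ratio kappa b m r <= c.

From Stdlib Require Import Reals Lra Lia List Classical.
Open Scope R_scope.

(* If [r, s(r)] lay inside E, every interval cover of E ∩ [r,1) would have weight at
   least (s(r) - r)/kappa(1 - r) = (1 - b r)(1 - r)/kappa(1 - r), since 1/kappa(1 - x)
   is at least 1/kappa(1 - r) on [r,1); so the density ratio at r would be at least 1.
   Hence for r close to 1 there is some t in [r, s(r)] outside E, and monotonicity gives
   g r <= g t <= h t <= h (s r).  The lower bound on cover weights rests on the fact that
   a countable cover of a compact interval by intervals has total length at least the
   length of the interval (Heine-Borel). *)

Definition total_length (l : list (R * R)) : R :=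
  fold_right (fun p acc => Rmax 0 (snd p - fst p) + acc) 0 l.

Lemma total_length_ge0 l : 0 <= total_length l.
Proof. induction l; simpl; [lra|]. pose proof (Rmax_l 0 (snd a - fst a)); lra. Qed.

Lemma total_length_app l1 l2 :
  total_length (l1 ++ l2) = total_length l1 + total_length l2.
Proof. induction l1; simpl; [lra|]. rewrite IHl1; lra. Qed.

Lemma total_length_map_seq (c d : nat -> R) N :
  total_length (map (fun n => (c n, d n)) (seq 0 (S N)))
  = sum_f_R0 (fun n => Rmax 0 (d n - c n)) N.
Proof.
  induction N; [simpl; lra|].
  rewrite seq_S, map_app, total_length_app, IHN; simpl; lra.
Qed.

(* Induction on the number of intervals: remove the one containing the right end v. *)
Lemma finite_open_cover_length n : forall l, (length l <= n)%nat -> forall u v,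
  (forall x, u <= x <= v -> exists p, In p l /\ fst p < x < snd p) ->
  v - u <= total_length l.
Proof.
  induction n as [|n IHn]; intros l Hl u v Hcov;
    (destruct (Rle_dec u v) as [Huv|]; [|pose proof (total_length_ge0 l); lra]).
  - destruct (Hcov v) as [p [Hp _]]; [lra|]. destruct l; simpl in *; [tauto|lia].
  - destruct (Hcov v) as [[c d] [Hp Hcd]]; [lra|]. simpl in Hcd.
    destruct (in_split _ _ Hp) as [l1 [l2 ->]].
    assert (Hrest : c - u <= total_length (l1 ++ l2)).
    { apply IHn; [rewrite length_app in *; simpl in Hl; lia|].
      intros x Hx. destruct (Hcov x) as [q [Hq Hxq]]; [lra|].
      exists q; split; [|exact Hxq]. apply in_app_iff in Hq; simpl in Hq.
      destruct Hq as [Hq|[<-|Hq]]; [apply in_app_iff; tauto| simpl in Hxq; lra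
                                   | apply in_app_iff; tauto]. }
    rewrite total_length_app in Hrest |- *; simpl.
    pose proof (Rmax_r 0 (d - c)); lra.
Qed.

Lemma INR_in_list_bounded (l : list R) :
  exists N, forall n, In (INR n) l -> (n <= N)%nat.
Proof.
  induction l as [|y l [N HN]]; [exists 0%nat; intros n []|].
  destruct (classic (exists k, y = INR k)) as [[k ->]|Hy].
  - exists (Nat.max N k). intros n [Hn|Hn].
    + apply INR_eq in Hn; lia.
    + specialize (HN n Hn); lia.
  - exists N. intros n [Hn|Hn]; [exfalso; eauto|auto].
Qed.

Lemma finite_subcover (c d : nat -> R) u v :
  (forall x, u <= x <= v -> exists n, c n < x < d n) ->
  exists N, forall x, u <= x <= v -> exists n, (n <= N)%nat /\ c n < x < d n.
Proof.
  intros Hcov.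
  assert (Hind : forall y, (exists x, exists n, y = INR n /\ c n < x < d n) ->
                           exists n, y = INR n) by (intros y [x [n [Hn _]]]; eauto).
  destruct (compact_P3 u v (mkfamily _ _ Hind)) as [D [HD [l Hl]]].
  - split.
    + intros x Hx. destruct (Hcov x Hx) as [n Hn]. exists (INR n). simpl; eauto.
    + intros y x [n [Hy Hxn]].
      assert (Hpos : 0 < Rmin (x - c n) (d n - x)) by (apply Rmin_pos; lra).
      exists (mkposreal _ Hpos). intros z Hz. unfold disc in Hz; simpl in Hz.
      exists n. split; [exact Hy|].
      pose proof (Rmin_l (x - c n) (d n - x)); pose proof (Rmin_r (x - c n) (d n - x)).
      apply Rabs_def2 in Hz; lra.
  - destruct (INR_in_list_bounded l) as [N HN]. exists N. intros x Hx.
    destruct (HD x Hx) as [y [[n [-> Hxn]] HDy]].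
    exists n. split; [|exact Hxn]. apply HN, Hl. split; simpl; eauto.
Qed.

Lemma open_cover_length (c d : nat -> R) u v :
  (forall x, u <= x <= v -> exists n, c n < x < d n) ->
  exists N, v - u <= sum_f_R0 (fun n => Rmax 0 (d n - c n)) N.
Proof.
  intros Hcov. destruct (finite_subcover c d u v Hcov) as [N HN]. exists N.
  rewrite <- total_length_map_seq.
  apply (finite_open_cover_length (S N)); [rewrite length_map, length_seq; lia|].
  intros x Hx. destruct (HN x Hx) as [n [Hn Hxn]].
  exists (c n, d n). split; [|exact Hxn].
  apply in_map_iff. exists n. split; [reflexivity|]. apply in_seq; lia.
Qed.

Lemma sum_geom_half_le_2 N : sum_f_R0 (fun i => (/2) ^ i) N <= 2.
Proof.
  rewrite tech3 by lra. pose proof (pow_lt (/2) (S N) ltac:(lra)).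
  replace (1 - /2) with (/2) by lra. unfold Rdiv. rewrite Rinv_inv. lra.
Qed.

(* Enlarge the n-th closed interval by eps/4 * 2^-n on each side to get an open cover;
   the total length grows by at most eps. *)
Lemma closed_cover_length (a b : nat -> R) u v L :
  (forall n, a n <= b n) ->
  (forall x, u <= x <= v -> exists n, a n <= x <= b n) ->
  (forall N, sum_f_R0 (fun n => b n - a n) N <= L) ->
  v - u <= L.
Proof.
  intros Hab Hcov HL. apply Rnot_lt_le. intro Hlt.
  set (eps := (v - u - L) / 2).
  set (e := fun n => eps / 4 * (/2) ^ n).
  assert (He : forall n, 0 < e n)
    by (intro n; apply Rmult_lt_0_compat; [unfold eps; lra|apply pow_lt; lra]).
  destruct (open_cover_length (fun n => a n - e n) (fun n => b n + e n) u v) as [N HN].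
  { intros x Hx. destruct (Hcov x Hx) as [n Hn]. exists n. specialize (He n); lra. }
  assert (Hsum : sum_f_R0 (fun n => Rmax 0 (b n + e n - (a n - e n))) N
               = sum_f_R0 (fun n => b n - a n) N + eps / 2 * sum_f_R0 (fun i => (/2) ^ i) N).
  { rewrite scal_sum, <- sum_plus. apply sum_eq. intros i _.
    rewrite Rmax_right; [unfold e; lra|]. specialize (Hab i); specialize (He i); lra. }
  pose proof (HL N). pose proof (sum_geom_half_le_2 N).
  assert (eps / 2 * sum_f_R0 (fun i => (/2) ^ i) N <= eps / 2 * 2)
    by (apply Rmult_le_compat_l; unfold eps; lra).
  unfold eps in *; lra.
Qed.

Lemma RiemannInt_lower_bound f a a' c l (pr : Riemann_integrable f a c) :
  a <= a' <= c ->
  (forall x, a < x < c -> 0 <= f x) ->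
  (forall x, a' < x < c -> l <= f x) ->
  l * (c - a') <= RiemannInt pr.
Proof.
  intros Ha Hf0 Hfl.
  rewrite <- (RiemannInt_P26 (RiemannInt_P22 pr Ha) (RiemannInt_P23 pr Ha) pr).
  assert (Hleft := RiemannInt_P19 (RiemannInt_P14 a a' 0) (RiemannInt_P22 pr Ha)
                     ltac:(lra) ltac:(intros x Hx; apply Hf0; lra)).
  assert (Hright := RiemannInt_P19 (RiemannInt_P14 a' c l) (RiemannInt_P23 pr Ha)
                      ltac:(lra) ltac:(intros x Hx; apply Hfl; lra)).
  rewrite RiemannInt_P15 in Hleft, Hright. lra.
Qed.

Lemma partial_sum_le_infinite_sum s l N :
  (forall n, 0 <= s n) -> infinite_sum s l -> sum_f_R0 s N <= l.
Proof.
  intros Hs Hl. apply (growing_ineq (fun n => sum_f_R0 s n)); [|exact Hl].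
  intro n; simpl; specialize (Hs (S n)); lra.
Qed.

Section WeightedCovers.

Variable kappa : R -> R.
Hypothesis kappa_pos : forall x, 0 < x < 1 -> 0 < kappa x < 1.
Hypothesis kappa_le : forall x y, 0 < x < 1 -> 0 < y < 1 -> x <= y -> kappa x <= kappa y.

Lemma wfun_pos x : 0 < x < 1 -> 0 < wfun kappa x.
Proof. intro Hx. apply Rinv_0_lt_compat, kappa_pos; lra. Qed.

(* On [a n, b n] ∩ [r, 1) the weight is at least 1/kappa(1 - r), and its length is the
   one of the truncated interval [max r (a n), max r (b n)]. *)
Lemma wcover_sum_interval_lower_bound (A : R -> Prop) r s S :
  0 < r -> r <= s -> s < 1 ->
  (forall x, r <= x <= s -> A x) ->
  wcover_sum kappa (fun x => A x /\ r <= x) S ->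
  (s - r) / kappa (1 - r) <= S.
Proof.
  intros Hr Hrs Hs HA [a [c [pr [Hac [Hcov HS]]]]].
  set (K := kappa (1 - r)).
  assert (HK : 0 < K < 1) by (apply kappa_pos; lra).
  assert (Hint0 : forall n, 0 <= RiemannInt (pr n)).
  { intro n. specialize (Hac n).
    assert (H := RiemannInt_lower_bound (wfun kappa) (a n) (c n) (c n) 0 (pr n) ltac:(lra)
                   ltac:(intros x Hx; left; apply wfun_pos; lra) ltac:(intros x Hx; lra)).
    lra. }
  assert (Hterm : forall n, Rmax r (c n) - Rmax r (a n) <= K * RiemannInt (pr n)).
  { intro n. specialize (Hint0 n). specialize (Hac n).
    destruct (Rle_dec (c n) r).
    - rewrite (Rmax_left r (c n)), (Rmax_left r (a n)) by lra.
      pose proof (Rmult_le_pos K _ (Rlt_le _ _ (proj1 HK)) Hint0); lra.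
    - rewrite (Rmax_right r (c n)) by lra.
      assert (Ha' : a n <= Rmax r (a n) <= c n /\ r <= Rmax r (a n))
        by (unfold Rmax; destruct Rle_dec; lra).
      assert (H := RiemannInt_lower_bound (wfun kappa) (a n) (Rmax r (a n)) (c n) (/ K)
                     (pr n) ltac:(lra) ltac:(intros x Hx; left; apply wfun_pos; lra)
                     ltac:(intros x Hx; apply Rinv_le_contravar;
                           [apply kappa_pos; lra | apply kappa_le; lra])).
      apply (Rmult_le_compat_l K) in H; [|lra].
      rewrite <- Rmult_assoc, Rinv_r in H by lra. lra. }
  assert (Hlen : s - r <= S * K).
  { apply (closed_cover_length (fun n => Rmax r (a n)) (fun n => Rmax r (c n))).
    - intro n. specialize (Hac n). unfold Rmax; repeat destruct Rle_dec; lra.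
    - intros x Hx. destruct (Hcov x) as [n Hn]; [split; [apply HA|]; lra | lra |].
      exists n. unfold Rmax; repeat destruct Rle_dec; lra.
    - intro N. eapply Rle_trans; [apply sum_Rle; intros n _; apply Hterm|].
      rewrite (sum_eq _ (fun i => RiemannInt (pr i) * K)) by (intros; ring).
      rewrite <- scal_sum, Rmult_comm. apply Rmult_le_compat_r; [lra|].
      apply partial_sum_le_infinite_sum; auto. }
  apply (Rmult_le_reg_r K); [lra|].
  unfold Rdiv. rewrite Rmult_assoc, Rinv_l by lra. lra.
Qed.

End WeightedCovers.

Lemma wcover_sum_subset kappa (A B : R -> Prop) S :
  (forall x, A x -> B x) -> wcover_sum kappa B S -> wcover_sum kappa A S.
Proof.
  intros HAB [a [c [pr [H1 [H2 H3]]]]]. exists a, c, pr.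
  split; [exact H1|split; [|exact H3]]. intros x Hx; apply H2; auto.
Qed.

(* The infimum of cover weights, obtained as minus the supremum of their opposites. *)
Lemma wint_exists_ge kappa A K0 :
  (exists S, wcover_sum kappa A S) ->
  (forall S, wcover_sum kappa A S -> K0 <= S) ->
  exists m, wint kappa A m /\ K0 <= m.
Proof.
  intros [S0 HS0] Hlb.
  set (B := fun y => wcover_sum kappa A (- y)).
  destruct (completeness B) as [l [Hub Hleast]].
  - exists (- K0). intros y Hy. specialize (Hlb _ Hy); lra.
  - exists (- S0). unfold B. rewrite Ropp_involutive; exact HS0.
  - exists (- l). split; [split|].
    + intros S HS. assert (Hy : B (- S)) by (unfold B; rewrite Ropp_involutive; exact HS).
      specialize (Hub _ Hy); lra.
    + intros eps Heps. apply NNPP. intro Hno.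
      enough (l <= l - eps) by lra.
      apply Hleast. intros y Hy. apply Rnot_lt_le. intro Hlt.
      apply Hno. exists (- y). split; [exact Hy|lra].
    + enough (l <= - K0) by lra.
      apply Hleast. intros y Hy. specialize (Hlb _ Hy); lra.
Qed.

Lemma admissible_kappa_le kappa :
  admissible_kappa kappa ->
  forall x y, 0 < x < 1 -> 0 < y < 1 -> x <= y -> kappa x <= kappa y.
Proof.
  intros [_ [Hid | [Hinc _]]] x y Hx Hy Hxy.
  - rewrite (Hid x Hx), (Hid y Hy); exact Hxy.
  - destruct (Req_dec x y) as [->|Hne]; [lra|]. left; apply Hinc; auto; lra.
Qed.

Lemma density_lt_1_gap (kappa b : R -> R) (E : R -> Prop) :
  admissible_kappa kappa ->
  wint_finite kappa E ->
  (forall r, 0 < r < 1 -> 0 < b r < 1) ->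
  density_lt_1 kappa b E ->
  exists R0, 0 < R0 < 1 /\
    forall r, R0 <= r < 1 -> exists t, r <= t <= 1 - b r * (1 - r) /\ ~ E t.
Proof.
  intros Hkappa [m0 [_ Hm0]] Hb [c [Hc [R1 [HR1 Hdens]]]].
  assert (Hk : forall x, 0 < x < 1 -> 0 < kappa x < 1) by apply Hkappa.
  exists (Rmax R1 (1/2)).
  pose proof (Rmax_l R1 (1/2)); pose proof (Rmax_r R1 (1/2)).
  split; [split; [lra|unfold Rmax; destruct Rle_dec; lra]|].
  intros r Hr. pose proof (Hb r ltac:(lra)) as Hbr.
  set (s := 1 - b r * (1 - r)).
  assert (Hsr : s - r = (1 - b r) * (1 - r)) by (unfold s; ring).
  assert (Hrs : r < s < 1) by (unfold s; nra).
  apply NNPP. intro Hno.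
  assert (Hall : forall x, r <= x <= s -> E x)
    by (intros x Hx; apply NNPP; intro; apply Hno; eauto).
  set (K := kappa (1 - r)).
  assert (HK : 0 < K < 1) by (apply Hk; lra).
  destruct (wint_exists_ge kappa (fun x => E x /\ r <= x) ((s - r) / K)) as [m [Hm Hmge]].
  - destruct (Hm0 1 ltac:(lra)) as [S0 [HS0 _]].
    exists S0. apply (wcover_sum_subset _ _ _ _ (fun x Hx => proj1 Hx) HS0).
  - intros S HS. apply (wcover_sum_interval_lower_bound kappa Hk (admissible_kappa_le _ Hkappa)
                          E r s); auto; lra.
  - specialize (Hdens r ltac:(lra) ltac:(lra) m Hm). unfold density_ratio in Hdens. fold K in Hdens.
    assert (Hratio : 1 - b r <= K / (1 - r) * m).
    { apply Rle_trans with (K / (1 - r) * ((s - r) / K)).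
      - right. rewrite Hsr. field. lra.
      - apply Rmult_le_compat_l; [apply Rlt_le, Rdiv_lt_0_compat; lra|exact Hmge]. }
    assert (1 <= K / (1 - r) * m / (1 - b r)); [|lra].
    apply (Rmult_le_reg_r (1 - b r)); [lra|].
    replace (K / (1 - r) * m / (1 - b r) * (1 - b r)) with (K / (1 - r) * m) by (field; lra).
    lra.
Qed.

Theorem lemma2 (kappa b : R -> R) (E : R -> Prop) (g h : R -> R)
  (Hkappa : admissible_kappa kappa)
  (HE : forall x, E x -> 0 <= x < 1)
  (Hmeas : lebesgue_measurable E)
  (Hint : wint_finite kappa E)
  (Hb : forall r, 0 < r < 1 -> 0 < b r < 1)
  (Hdens : density_lt_1 kappa b E)
  (Hg : forall x y, 0 < x < 1 -> 0 < y < 1 -> x <= y -> g x <= g y)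
  (Hh : forall x y, 0 < x < 1 -> 0 < y < 1 -> x <= y -> h x <= h y)
  (Hgh : forall r, 0 < r < 1 -> ~ E r -> g r <= h r) :
  exists R0, 0 <= R0 < 1 /\
    forall r, R0 <= r < 1 -> g r <= h (1 - b r * (1 - r)).
Proof.
  destruct (density_lt_1_gap kappa b E Hkappa Hint Hb Hdens) as [R0 [HR0 Hgap]].
  exists R0. split; [lra|].
  intros r Hr. pose proof (Hb r ltac:(lra)) as Hbr.
  assert (Hs : 1 - b r * (1 - r) < 1) by nra.
  destruct (Hgap r ltac:(lra)) as [t [Ht HEt]].
  apply Rle_trans with (g t); [apply Hg; lra|].
  apply Rle_trans with (h t); [apply Hgh; [lra|exact HEt]|].
  apply Hh; lra.
Qed.
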